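(* Let $Z$ be a finite abelian group, $q$ a prime power, and $\lambda_0,\dots,\lambda_q$ linear characters of $Z$, with $\Lambda:=\sum_{i=0}^q\lambda_i$. (i) If $\Lambda$ vanishes on $Z\setminus\{1\}$, then $|Z|$ divides $q+1$. (ii) If there is $z\in Z$ such that $\Lambda$ vanishes on $Z\setminus\{1,z\}$ and $\Lambda(z)=-(q+1)$, then $|Z|$ divides $2(q+1)$. (iii) Suppose $n\ge3$ is odd, $(n,q)\ne(3,2)$, $\lambda_0^2=1_Z$, and $\Sigma:=-\lambda_0+A\sum_{i=0}^q\lambda_i$ with $A=(q^n+1)/(q+1)$ takes values only in $\{-q^n,0\}\cup\{\pm q^i:0\le i\le n-1\}$ on $Z\setminus\{1\}$. Then either $|Z|$ divides $q+1$, or $Z$ contains an element $z$ with $\lambda_i(z)=-1$ for all $0\le i\le q$; in the latter case, if moreover $\Sigma$ is faithful, then $|Z|$ divides $2(q+1)$. *)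

From mathcomp Require Import all_boot all_order all_algebra all_fingroup all_solvable all_field all_character.
Set Implicit Arguments. Unset Strict Implicit. Unset Printing Implicit Defensive.

Definition prime_power (q : nat) : Prop :=
  exists p k : nat, [/\ prime p, (0 < k)%N & q = (p ^ k)%N].

From mathcomp Require Import all_boot all_order all_algebra all_fingroup all_solvable all_field all_character.
From mathcomp Require Import zify.
Import GRing.Theory Num.Theory.
Set Implicit Arguments. Unset Strict Implicit. Unset Printing Implicit Defensive.

(* Let L = \sum_i lambda_i, a character of Z with L(1) = q + 1.
   (i), (ii): inner products of characters are natural numbers.  If L vanishes
   off 1 then <L, 1> = (q + 1) / |Z|.  If L vanishes off {1, z} and
   L(z) = -(q + 1), then all lambda_i(z) = -1 (they have modulus 1), so that
   <L, lambda_0> = 2 (q + 1) / |Z|.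
   (iii): at z <> 1, lambda_0(z) = e is a sign and A L(z) = Sigma(z) + e is a
   rational integer; as L(z) is an algebraic integer it is an integer m with
   A m = Sigma(z) + e.  Since A(q + 1) = q^n + 1, the multiple A m is either
   too small or wedged between A and 2A unless m = 0 or m = -(q + 1).  So L
   vanishes off 1 unless some z has all lambda_i(z) = -1; and if y and z both
   have this property, y z^-1 lies in every ker lambda_i, hence in ker Sigma,
   and faithfulness forces y = z, so that (ii) applies. *)

Lemma prime_power_gt1 (q : nat) : prime_power q -> 1 < q.
Proof.
case=> p [k [p_pr k_gt0 ->]]; apply: leq_trans (prime_gt1 p_pr) _.
by rewrite -{1}(expn1 p) leq_pexp2l // prime_gt0.
Qed.

(* q + 1 divides q^n + 1 for odd n, because q = -1 modulo q + 1. *)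
Lemma dvdn_succ_expn_odd (q k : nat) : q.+1 %| q ^ k.*2.+1 + 1.
Proof.
have [->|q_gt0] := posnP q; first exact: dvd1n.
elim: k => [|k IHk]; first by rewrite expn1 addn1.
have step : q * q * (q ^ k.*2.+1 + 1) = (q ^ k.+1.*2.+1 + 1) + q.-1 * q.+1.
  rewrite doubleS !expnS; set X := q ^ k.*2.+1; nia.
by rewrite -(dvdn_addl (q ^ k.+1.*2.+1 + 1) (dvdn_mull q.-1 (dvdnn q.+1))) -step dvdn_mull.
Qed.

(* The size estimates on A used to pin down the integer multiples of A that
   lie near the admissible values of Sigma; here P = q^(n-2) and
   A = q^(n-1) - q^(n-2) + ... + 1, so P + 1 < A < q P - 1 < q P + 1 < 2 A. *)
Lemma sigma_bounds (q n : nat) : 1 < q -> 2 < n -> odd n -> (n, q) != (3, 2) ->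
  let A := (q ^ n + 1) %/ q.+1 in let P := q ^ (n - 2) in
  [/\ A * q.+1 = q ^ n + 1, P.+1 < A, A.+1 < q * P, q * P + 1 < A.*2
    & forall i, i < n -> q ^ i <= P \/ q ^ i = q * P].
Proof.
move=> q_gt1 n_gt2 odd_n nq_ne A P.
have qnE : q ^ n = q * q * P by rewrite -mulnA -!expnS; congr (_ ^ _); lia.
have q_le_P : q <= P.
  by rewrite /P (_ : n - 2 = (n - 3).+1) ?expnS ?leq_pmulr ?expn_gt0; lia.
have large : 2 < q \/ 3 < P.
  have [q_gt2|q_le2] := ltnP 2 q; [by left | right].
  have q2 : q = 2 by lia.
  have n_gt4 : 4 < n.
    have n_ne3 : n != 3 by apply: contraNneq nq_ne => ->; rewrite q2.
    have n_ne4 : n != 4 by apply: contraTneq odd_n => ->.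
    lia.
  by rewrite /P q2 (leq_trans _ (leq_pexp2l _ (_ : 2 <= n - 2))) //; lia.
have AE : A * q.+1 = q ^ n + 1.
  rewrite divnK // -[n]odd_double_half odd_n; exact: dvdn_succ_expn_odd.
split=> //; try by case: large; nia.
move=> i lt_in; have [le_i|lt_i] := leqP i (n - 2); first by left; rewrite leq_pexp2l; lia.
by right; rewrite (_ : i = (n - 2).+1) ?expnS; lia.
Qed.

Local Open Scope ring_scope.

Lemma intmul_small (A m : int) : `|A * m| < A -> m = 0.
Proof. by rewrite normrM; nia. Qed.

Lemma intmul_gap (A m : int) : A < `|A * m| < 2 * A -> False.
Proof.
rewrite normrM => /andP[lo hi].
have [m_le1|m_ge2] : `|m| <= 1 \/ 2 <= `|m| by lia.
all: nia.
Qed.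

Definition sigma_admissible {R : numDomainType} (n q : nat) (x : R) : Prop :=
  x = - (q ^ n)%:R \/ x = 0 \/
  exists2 i : nat, (i < n)%N & (x = (q ^ i)%:R \/ x = - (q ^ i)%:R).

Lemma admissible_multiple (q n : nat) (m e s : int) :
  (1 < q)%N -> (2 < n)%N -> odd n -> (n, q) != (3%N, 2%N) ->
  (e = 1 \/ e = -1) -> sigma_admissible n q s ->
  ((q ^ n + 1) %/ q.+1)%N%:Z * m = s + e -> m = 0 \/ m = - (q.+1)%:Z.
Proof.
move=> q_gt1 n_gt2 odd_n nq_ne e_sign s_adm.
have [] := sigma_bounds q_gt1 n_gt2 odd_n nq_ne.
set A := (_ %/ _)%N; set P := (q ^ (n - 2))%N => AE P_lt lt_qP qP_lt powers Am.
case: s_adm => [s_top|[s0|[i lt_in s_pow]]].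
- case: e_sign => e1; subst s e; last by right; nia.
  have Amq : A%:Z * (m + q.+1%:Z) = 2 by lia.
  have m_q0 : m + q.+1%:Z = 0 by apply: (@intmul_small A%:Z); rewrite Amq; lia.
  by move: Amq; rewrite m_q0 mulr0.
- by left; apply: (@intmul_small A%:Z); rewrite Am s0; case: e_sign => ->; lia.
- case: (powers i lt_in) => small_pow.
    by left; apply: (@intmul_small A%:Z); rewrite Am; case: s_pow; case: e_sign; lia.
  by exfalso; apply: (@intmul_gap A%:Z m); rewrite Am; case: s_pow; case: e_sign; lia.
Qed.

Lemma Aint_intmul (L : algC) (A : nat) (c : int) : (0 < A)%N -> L \in Aint ->
  L *+ A = c%:~R -> exists2 m : int, L = m%:~R & A%:Z * m = c.
Proof.
move=> A_gt0 L_Aint LA.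
have L_rat : L = ratr (c%:~R / A%:R).
  rewrite fmorph_div /= rmorph_int rmorph_nat -LA -[L *+ A]mulr_natr mulfK //.
  by rewrite pnatr_eq0 -lt0n.
have /intrP[m Lm] : L \is a Num.int by rewrite Cint_rat_Aint // L_rat Crat_rat.
exists m => //; apply: (@intr_inj algC); by rewrite -LA Lm intrM mulr_natl.
Qed.

Lemma sigma_admissible_int (n q : nat) (x : algC) : sigma_admissible n q x ->
  exists2 s : int, x = s%:~R & sigma_admissible n q s.
Proof.
case=> [->|[->|[i lt_in [->|->]]]].
- by exists (- (q ^ n)%:R); [rewrite rmorphN /= rmorph_nat | left].
- by exists 0; [rewrite rmorph0 | right; left].
- by exists (q ^ i)%:R; [rewrite rmorph_nat | right; right; exists i => //; left].
- by exists (- (q ^ i)%:R); [rewrite rmorphN /= rmorph_nat | right; right; exists i => //; right].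
Qed.

Lemma admissible_value (q n : nat) (L e : algC) :
  (1 < q)%N -> (2 < n)%N -> odd n -> (n, q) != (3%N, 2%N) ->
  L \in Aint -> (e = 1 \/ e = -1) ->
  sigma_admissible n q (- e + L *+ ((q ^ n + 1) %/ q.+1)) ->
  L = 0 \/ L = - (q.+1)%:R.
Proof.
move=> q_gt1 n_gt2 odd_n nq_ne L_Aint e_sign /sigma_admissible_int[s sE s_adm].
have [_ P_lt _ _ _] := sigma_bounds q_gt1 n_gt2 odd_n nq_ne.
have [ez ezE ez_sign] : exists2 ez : int, e = ez%:~R & (ez = 1 \/ ez = -1).
  by case: e_sign => ->; [exists 1 | exists (-1)]; rewrite ?rmorphN; auto.
have [m Lm Am] : exists2 m : int, L = m%:~R & ((q ^ n + 1) %/ q.+1)%N%:Z * m = s + ez.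
  by apply: Aint_intmul; [lia | done | rewrite intrD -sE -ezE addrC addNKr].
rewrite Lm; case: (admissible_multiple q_gt1 n_gt2 odd_n nq_ne ez_sign s_adm Am) => ->.
  by left.
by right; rewrite intrN.
Qed.

(* If |G| <chi, psi> = N for characters chi and psi, then |G| divides N,
   because <chi, psi> is a natural number. *)
Lemma card_dvd_cfdot (gT : finGroupType) (G : {group gT}) (chi psi : 'CF(G))
    (N : nat) : chi \is a character -> psi \is a character ->
  \sum_(x in G) chi x * (psi x)^* = N%:R -> (#|G| %| N)%N.
Proof.
move=> chi_char psi_char sumN; have := Cnat_cfdot_char chi_char psi_char.
rewrite cfdotE sumN => /natrP[k kE].
have : N%:R = #|G|%:R * k%:R :> algC by rewrite -kE mulrA divff ?neq0CG ?mul1r.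
by rewrite -natrM => /eqP; rewrite eqr_nat => /eqP ->; apply: dvdn_mulr.
Qed.

Lemma cfun_sqr1_sign (gT : finGroupType) (G : {group gT}) (xi : 'CF(G)) x :
  xi ^+ 2 = 1 -> x \in G -> xi x = 1 \/ xi x = -1.
Proof.
move=> xi2 Gx; have := congr1 (fun f : 'CF(G) => f x) xi2.
by rewrite /= expS_cfunE cfun1E Gx => /eqP; rewrite sqrf_eq1 => /orP[]/eqP; auto.
Qed.

Section SumOfLinearCharacters.

Variables (gT : finGroupType) (G : {group gT}) (I : finType).
Variable lambda : I -> 'CF(G).
Hypothesis lin_lambda : forall i, lambda i \is a linear_char.

Let Lambda := \sum_i lambda i.

Lemma Lambda_char : Lambda \is a character.
Proof. by apply: rpred_sum => i _; apply: lin_charW. Qed.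

Lemma Lambda1 : Lambda 1%g = #|I|%:R.
Proof.
rewrite sum_cfunE (eq_bigr (fun=> 1)) ?sumr_const // => i _.
exact: lin_char1.
Qed.

(* Values of modulus 1 summing to -#|I| are all equal to -1. *)
Lemma Lambda_eq_neg x : x \in G -> Lambda x = - #|I|%:R -> forall i, lambda i x = -1.
Proof.
move=> Gx Lx i; apply/eqP; rewrite -eqr_opp opprK; apply/eqP.
apply: (@normC_sum_upper _ _ predT (fun i => - lambda i x) (fun=> 1)) => //.
  by move=> j _; rewrite normrN normC_lin_char.
by rewrite sumrN -sum_cfunE Lx opprK sumr_const.
Qed.

Lemma Lambda_supp1_dvd :
  (forall x, x \in G -> x != 1%g -> Lambda x = 0) -> (#|G| %| #|I|)%N.
Proof.
move=> L0; apply: (card_dvd_cfdot Lambda_char (cfun1_char G)).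
rewrite (bigD1 1%g) //= big1 => [|x /andP[Gx x_ne1]]; last by rewrite L0 ?mul0r.
by rewrite Lambda1 cfun1E group1 rmorph1 mulr1 addr0.
Qed.

Lemma Lambda_supp2_dvd (i0 : I) z : z \in G ->
  (forall y, y \in G -> y != 1%g -> y != z -> Lambda y = 0) ->
  Lambda z = - #|I|%:R -> (#|G| %| 2 * #|I|)%N.
Proof.
move=> Gz L0 Lz; have z_neg1 := Lambda_eq_neg Gz Lz.
have I_gt0 : (0 < #|I|)%N by apply/card_gt0P; exists i0.
have z_ne1 : z != 1%g.
  apply/eqP => z1; move: Lz; rewrite z1 Lambda1 => /eqP.
  by rewrite -addr_eq0 -natrD pnatr_eq0 => /eqP; lia.
apply: (card_dvd_cfdot Lambda_char (lin_charW (lin_lambda i0))).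
rewrite (bigD1 1%g) //= (bigD1 z) /=; last by rewrite Gz z_ne1.
rewrite big1 => [|y /andP[/andP[Gy y_ne1] y_ne_z]]; last by rewrite L0 ?mul0r.
rewrite Lambda1 Lz lin_char1 // z_neg1 rmorph1 rmorphN1 mulr1 mulrNN mulr1.
by rewrite addr0 -natrD addnn -mul2n.
Qed.

Lemma lin_char_agree_ker y z : y \in G -> z \in G ->
  (forall i, lambda i y = lambda i z) ->
  (y * z^-1)%g \in G :&: \bigcap_i cfker (lambda i).
Proof.
move=> Gy Gz yz; have Gyz : (y * z^-1)%g \in G by rewrite groupM ?groupV.
rewrite inE Gyz; apply/bigcapP => i _; rewrite cfkerEchar ?lin_charW // inE Gyz.
have lin_i := lin_lambda i.
by rewrite lin_charM ?groupV // lin_charV // yz divff ?lin_char_neq0 // lin_char1 ?eqxx.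
Qed.

Lemma cfker_Sigma (i0 : I) (A : nat) :
  G :&: \bigcap_i cfker (lambda i) \subset cfker (- lambda i0 + Lambda *+ A).
Proof.
apply/subsetP => w w_ker; apply: (subsetP (cfker_add _ _)); apply/setIP; split.
  rewrite cfker_opp; move: w_ker => /setIP[_ /bigcapP]; exact.
by rewrite -scaler_nat; apply: (subsetP (cfker_scale _ _)); apply: (subsetP (cfker_sum _ _ _)).
Qed.

Lemma faithful_Sigma_separates (i0 : I) (A : nat) y z :
  cfaithful (- lambda i0 + Lambda *+ A) -> y \in G -> z \in G ->
  (forall i, lambda i y = lambda i z) -> y = z.
Proof.
rewrite cfaithfulE => /subsetP faithful Gy Gz yz.
have yz_ker : (y * z^-1)%g \in cfker (- lambda i0 + Lambda *+ A).
  by apply: (subsetP (cfker_Sigma i0 A)); apply: lin_char_agree_ker.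
by move/faithful/set1P/eqP: yz_ker; rewrite -eq_mulgV1 => /eqP.
Qed.

End SumOfLinearCharacters.

Theorem mainTheorem9 (gT : finGroupType) (Z : {group gT}) (q : nat)
  (lambda : 'I_q.+1 -> 'CF(Z)) :
  abelian Z -> prime_power q ->
  (forall i, lambda i \is a linear_char) ->
  (* (i) *)
  ((forall z, z \in Z -> z != 1%g -> (\sum_(i < q.+1) lambda i) z = 0) ->
     (#|Z| %| q.+1)%N)
  /\
  (* (ii) *)
  ((exists2 z, z \in Z &
      (forall y, y \in Z -> y != 1%g -> y != z -> (\sum_(i < q.+1) lambda i) y = 0)
      /\ (\sum_(i < q.+1) lambda i) z = - (q.+1)%:R) ->
     (#|Z| %| 2 * q.+1)%N)
  /\
  (* (iii) *)
  (forall n : nat, (3 <= n)%N -> odd n -> (n, q) != (3%N, 2%N) ->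
     lambda ord0 ^+ 2 = 1 ->
     let A := ((q ^ n + 1) %/ q.+1)%N in
     let Sigma := - lambda ord0 + (\sum_(i < q.+1) lambda i) *+ A in
     (forall z, z \in Z -> z != 1%g ->
        Sigma z = - (q ^ n)%:R \/ Sigma z = 0 \/
        exists2 i : nat, (i < n)%N & (Sigma z = (q ^ i)%:R \/ Sigma z = - (q ^ i)%:R)) ->
     ((#|Z| %| q.+1)%N \/ exists2 z, z \in Z & forall i, lambda i z = -1)
     /\
     ((exists2 z, z \in Z & forall i, lambda i z = -1) ->
        cfaithful Sigma -> (#|Z| %| 2 * q.+1)%N)).
Proof.
move=> _ /prime_power_gt1 q_gt1 lin_lambda.
set Lambda := \sum_(i < q.+1) lambda i.
have supp1 := Lambda_supp1_dvd lin_lambda; rewrite card_ord in supp1.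
have supp2 := Lambda_supp2_dvd lin_lambda; rewrite card_ord in supp2.
have neg_all := Lambda_eq_neg lin_lambda; rewrite card_ord in neg_all.
split; first exact: supp1.
split; first by case=> z Zz [L0 Lz]; exact: supp2 ord0 _ Zz L0 Lz.
move=> n n_gt2 odd_n nq_ne lambda0_2 A Sigma Sigma_adm.
have Lambda_val z : z \in Z -> z != 1%g -> Lambda z = 0 \/ Lambda z = - (q.+1)%:R.
  move=> Zz z_ne1; apply: (admissible_value q_gt1 n_gt2 odd_n nq_ne).
  - by apply: Aint_char; apply: Lambda_char.
  - exact: cfun_sqr1_sign lambda0_2 Zz.
  - by have := Sigma_adm z Zz z_ne1; rewrite /Sigma !cfunE muln_cfunE.
split.
  case: (boolP [exists z in Z, Lambda z == - (q.+1)%:R]) => [|no_neg].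
    by case/existsP=> z /andP[Zz /eqP Lz]; right; exists z => //; apply: neg_all.
  left; apply: supp1 => z Zz z_ne1; case: (Lambda_val z Zz z_ne1) => // Lz.
  by case/existsP: no_neg; exists z; rewrite Zz Lz eqxx.
case=> z0 Zz0 z0_neg faithful; apply: (supp2 ord0 _ Zz0).
  (* Any y with Lambda(y) = -(q + 1) has all lambda_i(y) = -1 = lambda_i(z0),
     so the faithfulness of Sigma forces y = z0. *)
  move=> y Zy y_ne1 y_ne_z0; case: (Lambda_val y Zy y_ne1) => // Ly.
  case/eqP: y_ne_z0; apply: (faithful_Sigma_separates lin_lambda faithful) => // i.
  by rewrite (neg_all y Zy Ly) z0_neg.
rewrite sum_cfunE (eq_bigr (fun=> -1)) => [|i _]; last exact: z0_neg.
by rewrite sumr_const card_ord mulNrn.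
Qed.
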